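(* Let $\kappa$ be a regular infinite cardinal and $A,B$ Boolean algebras with $A$ a subalgebra of $B$. If $A$ is complete (not necessarily a complete subalgebra of $B$) and $B$ has the $\kappa$-FN, then $A$ has the $\kappa$-FN.
   Context: For an infinite cardinal $\kappa$, a Boolean algebra $B$ has the $\kappa$-Freese–Nation property ($\kappa$-FN) if there is a map $f:B\to[B]^{<\kappa}$ such that for all $a,b\in B$ with $a\le b$ there is $c\in f(a)\cap f(b)$ with $a\le c\le b$. *)

From HB Require Import structures.
From mathcomp Require Import all_boot all_order.
Set Implicit Arguments. Unset Strict Implicit. Unset Printing Implicit Defensive.
Import Order.TTheory.
Local Open Scope order_scope.

(* Boolean algebras are MathComp's complemented distributive lattices
   with top and bottom: [ctbDistrLatticeType d]. *)

(* Cardinal comparison: |S| < |K|, i.e. there is no injection from K into S. *)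
Definition lt_card (K : Type) (T : Type) (S : T -> Prop) : Prop :=
  ~ exists g : K -> T, injective g /\ forall k, S (g k).

Definition infinite_card (K : Type) : Prop :=
  exists g : nat -> K, injective g.

Definition regular_card (K : Type) : Prop :=
  forall (I T : Type) (F : I -> T -> Prop),
    lt_card K (fun _ : I => True) ->
    (forall i, lt_card K (F i)) ->
    lt_card K (fun t => exists i, F i t).

(* kappa-Freese-Nation property, kappa = |K|:
   f : B -> [B]^{<kappa} such that a <= b implies some c in f a ∩ f b
   with a <= c <= b. *)
Definition kFN (K : Type) (d : Order.disp_t) (B : ctbDistrLatticeType d) : Prop :=
  exists f : B -> B -> Prop,
    (forall a, lt_card K (f a)) /\
    (forall a b : B, a <= b -> exists c, [/\ f a c, f b c, a <= c & c <= b]).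

(* emb is an (injective) Boolean algebra embedding, so that A is
   (isomorphic to) a subalgebra of B. *)
Definition BA_embedding (d d' : Order.disp_t) (A : ctbDistrLatticeType d)
    (B : ctbDistrLatticeType d') (emb : A -> B) : Prop :=
  injective emb /\ [/\
      (forall x y, emb (x `&` y) = emb x `&` emb y),
      (forall x y, emb (x `|` y) = emb x `|` emb y),
      (forall x, emb (~` x) = ~` (emb x)),
      emb \bot = \bot & emb \top = \top].

Definition complete_BA (d : Order.disp_t) (A : ctbDistrLatticeType d) : Prop :=
  forall X : A -> Prop, exists s : A,
    (forall x, X x -> x <= s) /\ (forall u, (forall x, X x -> x <= u) -> s <= u).

(* Since A is complete, every c in B has an envelope r c in A: the least
   x in A with c <= x.  Then a <= c <= b with a, b in A forces a <= r c <= b,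
   so pushing a Freese-Nation map f of B forward along r, a |-> r (f (emb a)),
   gives one for A; images of small sets stay small. *)
From mathcomp Require Import all_boot all_order.
From Stdlib Require Import ClassicalEpsilon.
Set Implicit Arguments. Unset Strict Implicit.
Import Order.TTheory.
Local Open Scope order_scope.

Lemma lt_card_image (K T U : Type) (S : T -> Prop) (h : T -> U) :
  lt_card K S -> lt_card K (fun y => exists x, S x /\ y = h x).
Proof.
move=> smallS [g [g_inj g_im]].
have [pre pre_spec] := choice _ g_im.
apply: smallS; exists pre; split=> [k1 k2 e|k]; last by case: (pre_spec k).
apply: g_inj; case: (pre_spec k1) => _ ->; by case: (pre_spec k2) => _ ->; rewrite e.
Qed.

Section Embedding.

Variables (d d' : Order.disp_t) (A : ctbDistrLatticeType d)
  (B : ctbDistrLatticeType d') (emb : A -> B).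
Hypothesis emb_BA : BA_embedding emb.

Lemma BA_embedding_le : {mono emb : x y / x <= y}.
Proof.
case: emb_BA => emb_inj [embI embU _ _ _] x y; apply/idP/idP => le_xy.
- by apply/meet_idPl; apply: emb_inj; rewrite embI; apply/meet_idPl.
- by apply/join_idPl; rewrite -embU (join_idPl le_xy).
Qed.

(* r c is the supremum of the lower bounds of {x | c <= emb x}, i.e. its
   infimum, which need not be preserved by emb. *)
Lemma complete_BA_envelope : complete_BA A ->
  exists r : B -> A, (forall a c, emb a <= c -> a <= r c) /\
                     (forall c b, c <= emb b -> r c <= b).
Proof.
move=> complA.
pose below (c : B) (y : A) := forall x, c <= emb x -> y <= x.
have [r r_sup] := choice _ (fun c => complA (below c)).
exists r; split=> [a c le_ac|c b le_cb]; have [r_ub r_least] := r_sup c.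
- apply: r_ub => x le_cx; rewrite -BA_embedding_le; exact: le_trans le_cx.
- by apply: r_least => x; apply.
Qed.

Lemma kFN_envelope (K : Type) (r : B -> A) :
  (forall a c, emb a <= c -> a <= r c) ->
  (forall c b, c <= emb b -> r c <= b) ->
  kFN K B -> kFN K A.
Proof.
move=> r_ge r_le [f [f_small f_FN]].
exists (fun a y => exists c, f (emb a) c /\ y = r c); split=> [a|a b le_ab].
  exact: lt_card_image.
have [c [fac fbc le_ac le_cb]] := f_FN _ _ (etrans (BA_embedding_le a b) le_ab).
by exists (r c); split; [exists c | exists c | apply: r_ge | apply: r_le].
Qed.

End Embedding.

Theorem lemma6p1 (K : Type) (d d' : Order.disp_t)
    (A : ctbDistrLatticeType d) (B : ctbDistrLatticeType d') (emb : A -> B) :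
  infinite_card K -> regular_card K ->
  BA_embedding emb -> complete_BA A -> kFN K B -> kFN K A.
Proof.
move=> _ _ emb_BA complA.
have [r [r_ge r_le]] := complete_BA_envelope emb_BA complA.
exact: (kFN_envelope emb_BA r_ge r_le).
Qed.
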